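(* Let $a\in\mathbb N$ and let $\mathfrak o$ be a compact discrete valuation ring with residue field cardinality $q$; put $t=q^{-s}$. Let $V_{1,a}(\mathfrak o)$ be the $\mathfrak o$-representation of the star quiver $\mathsf S_a$ in which every vertex is represented by $\mathfrak o$ and every arrow by the identity map. Then $$\zeta_{V_{1,a}(\mathfrak o)}(s)=\frac{C_{a-1}(t,t)}{\prod_{i=1}^{a}(1-t^i)}.$$
   Context: The star quiver $\mathsf S_a$ has vertices $v_1,\dots,v_a$ and $a-1$ arrows $v_1\to v_j$ ($j=2,\dots,a$). For a representation $V=(\mathcal L_\iota,f_\phi)$, a subrepresentation is a tuple of submodules $\Lambda_\iota\le\mathcal L_\iota$ with $f_\phi(\Lambda_{\mathrm{tail}(\phi)})\subseteq\Lambda_{\mathrm{head}(\phi)}$, and $\zeta_V(s)=\sum_{V'}\prod_\iota|\mathcal L_\iota:\Lambda_\iota|^{-s}$ over finite-index subrepresentations. Carlitz' $q$-Eulerian polynomial is $C_{m}(x,y)=\sum_{w\in S_{m}}x^{\mathrm{des}(w)}y^{\mathrm{maj}(w)}$, where for $w\in S_m$, $\mathrm{des}(w)=|\{i\in[m-1]:w(i)>w(i+1)\}|$ and $\mathrm{maj}(w)=\sum_{i: w(i)>w(i+1)}i$ (with $C_0=1$). *)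

From Stdlib Require Import Reals List.
From mathcomp Require Import all_boot all_order all_algebra all_fingroup.
Set Implicit Arguments. Unset Strict Implicit. Unset Printing Implicit Defensive.

Import GRing.Theory.

Section Ring.
Local Open Scope ring_scope.
Variable O : idomainType.

Definition divides (x y : O) : Prop := exists r : O, y = (r * x)%R.

Definition dvr_uniformizer (pi : O) : Prop :=
  pi <> 0%R /\ ~ (pi \is a GRing.unit) /\
  forall x : O, x <> 0%R ->
    exists (u : O) (k : nat), u \is a GRing.unit /\ x = (u * pi ^+ k)%R.

Definition pi_complete (pi : O) : Prop :=
  forall x : nat -> O,
    (forall n, divides (pi ^+ n) (x n.+1 - x n)%R) ->
    exists y : O, forall n, divides (pi ^+ n) (y - x n)%R.

Definition submodule (L : O -> Prop) : Prop :=
  L 0%R /\ (forall x y, L x -> L y -> L (x + y)%R) /\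
  (forall r x, L x -> L (r * x)%R).

(* |O : L| = n  (L has finite index n): a complete irredundant
   system of n coset representatives *)
Definition has_index (L : O -> Prop) (n : nat) : Prop :=
  exists s : seq O, size s = n /\
    (forall x : O, exists i, (i < n)%N /\ L (x - nth 0%R s i)%R) /\
    (forall i j, (i < n)%N -> (j < n)%N -> L (nth 0%R s i - nth 0%R s j)%R -> i = j).

(* O is a compact DVR with residue field of cardinality q
   (compact DVR = complete DVR with finite residue field) *)
Definition compact_dvr_residue (q : nat) : Prop :=
  exists pi : O, dvr_uniformizer pi /\ pi_complete pi /\
    has_index (divides pi) q.

(* ---------- the representation V_{1,a}(O) of the star quiver S_a ----------
   vertices v_1,...,v_a are 'I_a (v_1 = index 0), arrows v_1 -> v_j (j<>1),
   each vertex represented by O and each arrow by the identity map. *)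
Definition star_subrep (a : nat) (L : 'I_a -> O -> Prop) : Prop :=
  (forall i, submodule (L i)) /\
  (forall i j : 'I_a, nat_of_ord i = 0%N -> i <> j ->
     forall x, L i x -> L j x).

Definition total_index (a : nat) (L : 'I_a -> O -> Prop) (N : nat) : Prop :=
  exists n : 'I_a -> nat, (forall i, has_index (L i) (n i)) /\
    (\prod_(i < a) n i)%N = N.
End Ring.

Definition card_set (T : Type) (P : T -> Prop) (n : nat) : Prop :=
  exists l : list T, NoDup l /\ length l = n /\ forall x, P x <-> In x l.

(* ---------- Carlitz q-Eulerian polynomial ----------
   w : 'S_m acts on {0,...,m-1}; position j (0-based) is a descent if
   w j > w (j+1); its 1-based position is j+1. *)
Definition is_descent (m : nat) (w : 'S_m) (j : 'I_m) : bool :=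
  [exists k : 'I_m, (nat_of_ord k == j.+1) && (w k < w j)%N].

Definition des (m : nat) (w : 'S_m) : nat := #|[set j | is_descent w j]|.
Definition maj (m : nat) (w : 'S_m) : nat := (\sum_(j < m | is_descent w j) j.+1)%N.

Definition carlitz (m : nat) (x y : R) : R :=
  foldr Rplus R0 [seq Rmult (pow x (des w)) (pow y (maj w)) | w <- enum [set: 'S_m]].

Definition denom (a : nat) (t : R) : R :=
  foldr Rmult R1 [seq Rminus R1 (pow t i) | i <- iota 1 a].

(* Every finite-index submodule of o is pi^k o, of index q^k.  A subrepresentation of
   V_{1,a}(o) of total index N is therefore an exponent vector (k_1, ..., k_a) with
   k_j <= k_1 and q^(k_1 + ... + k_a) = N, and zeta(s) is the sum of t^(k_1 + ... + k_a)
   over these vectors.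
   Sorting (k_2, ..., k_a) decreasingly and stably attaches to each vector a permutation
   w in S_{a-1}; the vectors sorted by w are the chains
   k_1 >= k_{w(1)+1} >= ... >= k_{w(a-1)+1} >= 0 that drop strictly after each descent
   of w.  In terms of its gaps d_0, ..., d_{a-1} >= 0 such a chain has weight
   sum_i (i+1) d_i + des w + maj w, so the geometric series give
   t^(des w + maj w) / prod_{i=1}^{a} (1 - t^i) for each w.  The partial sums of the
   Dirichlet series are squeezed between truncations of this sum. *)

From Stdlib Require Import Reals List Wf_nat.
From mathcomp Require Import all_boot all_order all_algebra all_fingroup.
From Stdlib Require Import FunctionalExtensionality PropExtensionality ClassicalEpsilon Classical.
From mathcomp Require Import Rstruct zify ring lra.
Set Implicit Arguments. Unset Strict Implicit. Unset Printing Implicit Defensive.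
Import Order.TTheory GRing.Theory Num.Theory.

(** * Finite-index submodules of a discrete valuation ring *)

Section Submodules.
Variable O : idomainType.
Local Open Scope ring_scope.
Implicit Types (L : O -> Prop) (x y : O).

Lemma submoduleB L x y : submodule L -> L x -> L y -> L (x - y).
Proof. by move=> [_ [LD LM]] Lx Ly; apply: LD => //; rewrite -mulN1r; apply: LM. Qed.

Lemma has_index_mkseq L n (g : nat -> O) :
  (forall x, exists i, (i < n)%N /\ L (x - g i)) ->
  (forall i j, (i < n)%N -> (j < n)%N -> L (g i - g j) -> i = j) ->
  has_index L n.
Proof.
move=> cover irr; exists (mkseq g n); rewrite size_mkseq; split=> //; split.
  by move=> x; have [i [lt_in Li]] := cover x; exists i; rewrite nth_mkseq.
by move=> i j lt_in lt_jn; rewrite !nth_mkseq //; apply: irr.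
Qed.

Lemma has_index_unique L n1 n2 :
  submodule L -> has_index L n1 -> has_index L n2 -> n1 = n2.
Proof.
move=> subL; suff le_index n n' : has_index L n -> has_index L n' -> (n <= n')%N.
  by move=> h1 h2; apply/eqP; rewrite eqn_leq !le_index.
move=> [s [_ [_ irr]]] [s' [_ [cover' _]]].
have coset i : {j : 'I_n' | L (nth 0 s i - nth 0 s' j)}.
  apply: constructive_indefinite_description.
  by have [j [lt_jn Lj]] := cover' (nth 0 s i); exists (Ordinal lt_jn).
have inj : injective (fun i : 'I_n => sval (coset i)).
  move=> i i' eq_ii'; apply: val_inj; apply: irr (ltn_ord i) (ltn_ord i') _.
  have := submoduleB subL (svalP (coset i)) (svalP (coset i')).
  by rewrite eq_ii' opprB addrA subrK.
by have := leq_card _ inj; rewrite !card_ord.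
Qed.

End Submodules.

Section Uniformizer.
Variables (O : idomainType) (pi : O).
Local Open Scope ring_scope.
Hypothesis pi_unif : dvr_uniformizer pi.
Implicit Types (L : O -> Prop) (x y : O).

Let pi_neq0 : pi != 0. Proof. by case: pi_unif => /eqP. Qed.
Let pi_nonunit : pi \isn't a GRing.unit. Proof. by case: pi_unif => _ [/negP]. Qed.
Let pi_factor x : x != 0 -> exists u k, u \is a GRing.unit /\ x = u * pi ^+ k.
Proof. by case: pi_unif => _ [_ factor] /eqP; apply: factor. Qed.

Definition pow_ideal k := divides (pi ^+ k).

Lemma pow_ideal_submodule k : submodule (pow_ideal k).
Proof.
split; first by exists 0; rewrite mul0r.
split; first by move=> x y [r ->] [r' ->]; exists (r + r'); rewrite mulrDl.
by move=> r x [r' ->]; exists (r * r'); rewrite mulrA.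
Qed.

Lemma pow_ideal0 x : pow_ideal 0 x.
Proof. by exists x; rewrite expr0 mulr1. Qed.

Lemma pow_idealMX k j y : (k <= j)%N -> pow_ideal k (y * pi ^+ j).
Proof. by move=> le_kj; exists (y * pi ^+ (j - k)); rewrite -mulrA -exprD subnK. Qed.

Lemma pow_idealW j k x : (j <= k)%N -> pow_ideal k x -> pow_ideal j x.
Proof. by move=> le_jk [r ->]; apply: pow_idealMX. Qed.

Lemma pow_ideal_unitMX k j u :
  u \is a GRing.unit -> pow_ideal k (u * pi ^+ j) -> (k <= j)%N.
Proof.
move=> u_unit [r eq_u]; rewrite leqNgt; apply/negP => lt_jk.
rewrite -(subnK (ltnW lt_jk)) exprD mulrA in eq_u.
have /(congr1 (fun v => v \is a GRing.unit)) := mulIf (expf_neq0 j pi_neq0) eq_u.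
by rewrite u_unit unitrM unitrX_pos ?subn_gt0 // (negPf pi_nonunit) andbF.
Qed.

Lemma pow_idealX k j : pow_ideal k (pi ^+ j) <-> (k <= j)%N.
Proof.
rewrite -[pi ^+ j]mul1r; split; last exact: pow_idealMX.
by apply: pow_ideal_unitMX; rewrite unitr1.
Qed.

Lemma pow_ideal_inj : injective pow_ideal.
Proof.
move=> j k eq_jk; apply/eqP; rewrite eqn_leq.
by apply/andP; split; apply/pow_idealX; [rewrite eq_jk | rewrite -eq_jk]; apply/pow_idealX.
Qed.

Lemma expr_pi_inj : injective (fun k => pi ^+ k).
Proof.
move=> i j /= eq_ij; apply/eqP; rewrite eqn_leq.
by apply/andP; split; apply/pow_idealX; [rewrite -eq_ij | rewrite eq_ij]; exists 1; rewrite mul1r.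
Qed.

Lemma has_index_pow_ideal q k : has_index (divides pi) q -> has_index (pow_ideal k) (q ^ k).
Proof.
move=> [s [size_s [cover irr]]]; elim: k => [|k [u [size_u [cover_u irr_u]]]].
  apply: (@has_index_mkseq _ _ _ (fun _ => 0)) => [x|i j].
    by exists 0%N; split=> //; apply: pow_ideal0.
  by rewrite expn0 !ltnS !leqn0 => /eqP -> /eqP ->.
have q_gt0 : (0 < q)%N by case: (cover 0) => i [+ _]; apply: leq_ltn_trans.
pose g n := nth 0 s (n %% q) + pi * nth 0 u (n %/ q).
apply: (@has_index_mkseq _ _ _ g).
  move=> x; have [i [lt_iq [r eq_r]]] := cover x; have [j [lt_jk [r' eq_r']]] := cover_u r.
  exists (i + j * q)%N; split.
    rewrite expnSr (leq_trans (_ : _ < j.+1 * q)%N) ?mulSn ?ltn_add2r //.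
    by rewrite -mulSn leq_mul2r lt_jk orbT.
  rewrite /g addnC modnMDl divnMDl // modn_small // divn_small // addn0.
  exists r'; rewrite -[x](subrK (nth 0 s i)) eq_r -[r](subrK (nth 0 u j)) eq_r' exprS.
  by ring.
move=> n n' lt_n lt_n' [r eq_r].
have eq_mod : (n %% q = n' %% q)%N.
  apply: irr; rewrite ?ltn_mod //.
  exists (r * pi ^+ k - (nth 0 u (n %/ q) - nth 0 u (n' %/ q))).
  have -> : nth 0 s (n %% q) - nth 0 s (n' %% q) =
            g n - g n' - pi * (nth 0 u (n %/ q) - nth 0 u (n' %/ q)) by rewrite /g; ring.
  by rewrite eq_r exprS; ring.
have eq_div : (n %/ q = n' %/ q)%N.
  apply: irr_u; rewrite ?ltn_divLR // -?expnSr //.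
  exists r; apply: (mulfI pi_neq0).
  have -> : pi * (nth 0 u (n %/ q) - nth 0 u (n' %/ q)) = g n - g n' by rewrite /g eq_mod; ring.
  by rewrite eq_r exprS; ring.
by rewrite (divn_eq n q) (divn_eq n' q) eq_mod eq_div.
Qed.

Lemma residue_card_ge2 q : has_index (divides pi) q -> (2 <= q)%N.
Proof.
case: q => [|[|q]] // [s [_ [cover _]]]; first by have [i []] := cover 0.
have [i [+ [r eq_r]]] := cover 1; have [j [+ [r' eq_r']]] := cover 0.
rewrite !ltnS !leqn0 => /eqP eq_j /eqP eq_i; rewrite eq_i eq_j sub0r in eq_r eq_r'.
have : (r - r') * pi \is a GRing.unit by rewrite mulrBl -eq_r -eq_r' opprK subrK unitr1.
by rewrite unitrM (negPf pi_nonunit) andbF.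
Qed.

Lemma has_index_nonzero L n : has_index L n -> exists x, L x /\ x <> 0.
Proof.
move=> [s [size_s [cover _]]]; apply: NNPP => L0.
have mem_pow i : pi ^+ i \in s.
  have [j [lt_jn Lj]] := cover (pi ^+ i).
  have /eqP : pi ^+ i - nth 0 s j = 0 by apply: NNPP => nz; apply: L0; exists (pi ^+ i - nth 0 s j).
  by rewrite subr_eq0 => /eqP ->; rewrite mem_nth ?size_s.
have sub_s : {subset [seq pi ^+ i | i <- iota 0 n.+1] <= s} by move=> _ /mapP [i _ ->].
have := uniq_leq_size _ sub_s; rewrite size_map size_iota size_s ltnn map_inj_uniq ?iota_uniq.
  by move=> /(_ isT).
by move=> i j; apply: expr_pi_inj.
Qed.

Lemma pow_ideal_of_index L n : submodule L -> has_index L n -> exists k, L = pow_ideal k.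
Proof.
move=> [_ [_ LM]] /has_index_nonzero [x [Lx /eqP x_neq0]].
have L_unitMX u j : u \is a GRing.unit -> L (u * pi ^+ j) -> L (pi ^+ j).
  by move=> u_unit /(LM u^-1); rewrite mulrA mulVr // mul1r.
have [u [j [u_unit eq_x]]] := pi_factor x_neq0.
have Lj : L (pi ^+ j) by apply: (L_unitMX u _ u_unit); rewrite -eq_x.
have [k [[Lk k_min] _]] := dec_inh_nat_subset_has_unique_least_element
  (fun j => L (pi ^+ j)) (fun j => classic _) (ex_intro _ j Lj).
exists k; apply: functional_extensionality => y; apply: propositional_extensionality; split.
  have [->|y_neq0] := eqVneq y 0; first by exists 0; rewrite mul0r.
  have [u' [j' [u'_unit ->]]] := pi_factor y_neq0 => Ly.
  by apply/pow_idealMX/ssrnat.leP/k_min; apply: (L_unitMX u').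
by move=> [r ->]; apply: LM.
Qed.

End Uniformizer.

(** * Counting subrepresentations *)

Lemma In_mem (T : eqType) (x : T) (s : seq T) : List.In x s <-> x \in s.
Proof.
elim: s => [|y s IH] //=; rewrite in_cons; split.
  by move=> [->|/IH ->]; rewrite ?eqxx ?orbT.
by move=> /orP [/eqP ->|/IH]; [left|right].
Qed.

Lemma uniq_NoDup (T : eqType) (s : seq T) : uniq s -> NoDup s.
Proof.
elim: s => [|x s IH] /=; first by constructor.
by move=> /andP [x_notin /IH]; constructor; rewrite // In_mem; apply/negP.
Qed.

Lemma card_set_injective (A : finType) (D : {pred A}) (T : Type) (h : A -> T)
    (P : T -> Prop) :
  {in D &, injective h} -> (forall x, P x <-> exists2 a, a \in D & x = h a) ->
  card_set P #|D|.
Proof.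
move=> h_inj imP; exists (map h (enum D)); split; last split.
- apply: NoDup_map_NoDup_ForallPairs; last exact/uniq_NoDup/enum_uniq.
  by move=> a b /In_mem a_in /In_mem b_in; apply: h_inj; rewrite -mem_enum.
- by rewrite length_map cardE.
move=> x; rewrite imP; split=> [[a a_in ->]|/in_map_iff [a [<- /In_mem]]].
  by apply: in_map; apply/In_mem; rewrite mem_enum.
by rewrite mem_enum; exists a.
Qed.

Definition weight (A : finType) (f : A -> nat) : nat := \sum_x f x.

Definition first_max m (f : 'I_m.+1 -> nat) : bool := [forall j, f j <= f ord0].

Definition natf (A : finType) n (f : {ffun A -> 'I_n}) : {ffun A -> nat} :=
  [ffun x => val (f x)].

Definition tailf m (f : 'I_m.+1 -> nat) : 'I_m -> nat := fun j => f (lift ord0 j).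

Definition star_code m q N (f : 'I_m.+1 -> nat) : bool := first_max f && (q ^ weight f == N).

Lemma weight_ge (A : finType) (f : A -> nat) x : f x <= weight f.
Proof. by rewrite /weight (bigD1 x) //= leq_addr. Qed.

Section StarQuiver.
Variables (O : idomainType) (pi : O) (q m : nat).
Hypotheses (pi_unif : dvr_uniformizer pi) (residue_q : has_index (divides pi) q).

Lemma star_subrep_pow_ideal (L : 'I_m.+1 -> O -> Prop) N :
  star_subrep L /\ total_index L N <->
  exists2 k : 'I_m.+1 -> nat, star_code q N k & L = (fun i => pow_ideal pi (k i)).
Proof.
split=> [[[subL L0_sub] [n [index_n prod_n]]]|[k /andP [/forallP k_max /eqP wk] ->]].
  have pow_k i : {k | L i = pow_ideal pi k}.
    exact/constructive_indefinite_description/(pow_ideal_of_index pi_unif (subL i) (index_n i)).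
  pose k i := sval (pow_k i); have Lk i : L i = pow_ideal pi (k i) := svalP (pow_k i).
  exists k; last exact: functional_extensionality.
  apply/andP; split.
    apply/forallP => j; have [-> //|j_neq0] := eqVneq j ord0.
    apply/(pow_idealX pi_unif); rewrite -Lk; apply: (L0_sub ord0) => //.
      by move=> eq_0j; rewrite eq_0j eqxx in j_neq0.
    by rewrite Lk; apply/(pow_idealX pi_unif).
  rewrite -prod_n /weight expn_sum; apply/eqP/eq_bigr => i _.
  by apply: has_index_unique (subL i) _ (index_n i); rewrite Lk; apply: has_index_pow_ideal.
split; first split.
- by move=> i; apply: pow_ideal_submodule.
- move=> i j i0 _ x; have -> : i = ord0 by apply: val_inj.
  exact: pow_idealW (k_max j).
exists (fun i => q ^ k i)%N; split; first by move=> i; apply: has_index_pow_ideal.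
by rewrite -expn_sum.
Qed.

(* A code f stands for L_i = pi^(f i) o; its entries satisfy f i <= weight f < N, so the
   codomain 'I_N.+1 loses nothing. *)
Definition star_codes N := [set f : {ffun 'I_m.+1 -> 'I_N.+1} | star_code q N (natf f)].

Lemma card_set_star_subrep N :
  card_set (fun L : 'I_m.+1 -> O -> Prop => star_subrep L /\ total_index L N) #|star_codes N|.
Proof.
apply: (card_set_injective (h := fun f i => pow_ideal pi (natf f i))) => [f g _ _ eq_fg|L].
  apply/ffunP => i; have /(pow_ideal_inj pi_unif) := congr1 (fun L => L i) eq_fg.
  by rewrite !ffunE; apply: val_inj.
rewrite star_subrep_pow_ideal; split=> [[k code_k ->]|[f]].
  have lt_kN i : (k i < N.+1)%N.
    case/andP: code_k => _ /eqP <-; rewrite ltnS (leq_trans (weight_ge k i)) // ltnW // ltn_expl //.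
    exact: (residue_card_ge2 pi_unif residue_q).
  exists [ffun i => Ordinal (lt_kN i)]; last first.
    by apply: functional_extensionality => i; rewrite !ffunE.
  rewrite inE (_ : natf _ = k :> (_ -> _)) //.
  by apply: functional_extensionality => i; rewrite !ffunE.
by rewrite inE => code_f ->; exists (natf f).
Qed.

End StarQuiver.

(** * Stable sorting *)

Lemma perm_enum_ordP m (s : seq 'I_m) :
  reflect (exists w : 'S_m, s = map w (enum 'I_m)) (perm_eq s (enum 'I_m)).
Proof.
have tuple_w (w : 'S_m) : [tuple tnth (ord_tuple m) (w i) | i < m] = map w (enum 'I_m) :> seq _.
  by rewrite /= -map_comp enumT; apply: eq_map => i /=; rewrite tnth_ord_tuple.
by apply: (iffP (@tuple_permP _ _ s (ord_tuple m))) => [] [w ->]; exists w; rewrite tuple_w.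
Qed.

Definition ge_stable m (g : 'I_m -> nat) : rel 'I_m :=
  fun x y => (g y < g x) || ((g x == g y) && (x <= y)).

Definition sorts m (w : 'S_m) (g : 'I_m -> nat) := sorted (ge_stable g) (map w (enum 'I_m)).

Section StableSort.
Variables (m : nat) (g : 'I_m -> nat).

Lemma ge_stable_total : total (ge_stable g).
Proof. by move=> x y; rewrite /ge_stable; case: ltngtP => //= _; apply: leq_total. Qed.

Lemma ge_stable_trans : transitive (ge_stable g).
Proof.
move=> y x z; rewrite /ge_stable.
move=> /orP [lt_yx|/andP [/eqP -> le_xy]] /orP [lt_zy|/andP [/eqP <- le_yz]].
- by rewrite (ltn_trans lt_zy lt_yx).
- by rewrite lt_yx.
- by rewrite lt_zy.
- by rewrite eqxx (leq_trans le_xy le_yz) orbT.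
Qed.

Lemma ge_stable_anti : antisymmetric (ge_stable g).
Proof.
move=> x y; rewrite /ge_stable; case: ltngtP => //= _ /andP [le_xy le_yx].
by apply: val_inj; apply/eqP; rewrite eqn_leq le_xy.
Qed.

Definition sorting_perm : 'S_m := odflt 1%g [pick w | sorts w g].

Lemma sorts_sorting_perm : sorts sorting_perm g.
Proof.
rewrite /sorting_perm; case: pickP => [w //|no_w].
have /perm_enum_ordP [w eq_w] : perm_eq (sort (ge_stable g) (enum 'I_m)) (enum 'I_m).
  by rewrite perm_sort.
by have := no_w w; rewrite /sorts -eq_w sort_sorted //; apply: ge_stable_total.
Qed.

Lemma sorting_permE w : sorts w g -> sorting_perm = w.
Proof.
move=> sorts_w; apply/permP => i; suff : map sorting_perm (enum 'I_m) = map w (enum 'I_m).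
  by move/eq_in_map/(_ i); rewrite mem_enum; apply.
apply: sorted_eq ge_stable_trans ge_stable_anti _ _ sorts_sorting_perm sorts_w _.
have perm_enum (w' : 'S_m) : perm_eq (map w' (enum 'I_m)) (enum 'I_m).
  by apply/perm_enum_ordP; exists w'.
by rewrite (permPr (perm_enum w)) perm_enum.
Qed.

Lemma sortsP w : sorts w g <-> forall i j : 'I_m, j = i.+1 :> nat -> ge_stable g (w i) (w j).
Proof.
rewrite /sorts; case: (posnP m) => [m0|m_gt0].
  have -> : enum 'I_m = [::] by apply: size0nil; rewrite size_enum_ord.
  by split=> // _ [i lt_im]; exfalso; rewrite m0 in lt_im.
pose x0 := w (Ordinal m_gt0).
have nth_w (k : 'I_m) : nth x0 (map w (enum 'I_m)) k = w k.
  by rewrite (nth_map (Ordinal m_gt0)) ?size_enum_ord // nth_ord_enum.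
split=> [/(sortedP x0) adj i j eq_ji | adj]; last apply/(sortedP x0) => i lt_i.
  by have := adj i; rewrite size_map size_enum_ord -eq_ji ltn_ord !nth_w; apply.
rewrite size_map size_enum_ord in lt_i.
by rewrite (nth_w (Ordinal (ltnW lt_i))) (nth_w (Ordinal lt_i)); apply: adj.
Qed.

End StableSort.

(** * Chains and their gaps *)

Lemma sum_tail_sums n (F : nat -> nat) :
  \sum_(p < n) \sum_(p <= i < n) F i = \sum_(i < n) i.+1 * F i.
Proof.
elim: n => [|n IH]; first by rewrite !big_ord0.
rewrite big_ord_recr [RHS]big_ord_recr /= -IH big_nat1.
rewrite (eq_bigr (fun p : 'I_n => \sum_(p <= i < n) F i + F n)) => [|p _]; last first.
  by rewrite big_nat_recr //= ltnW.
by rewrite big_split /= sum_nat_const card_ord mulSn; lia.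
Qed.

Section Gaps.
Variables (m : nat) (w : 'S_m).
Implicit Types (f : 'I_m.+1 -> nat) (d : nat -> nat).
Local Notation sigma := (lift_perm ord0 ord0 w).

(* [chain_at f] lists the values of f in the order 0, w 0 + 1, ..., w (m - 1) + 1 and pads
   with 0 at position m + 1; a chain must drop strictly at position p exactly when p - 1 is
   a descent of w. *)
Definition chain_at f p : nat := if p < m.+1 then f (sigma (inord p)) else 0.

Definition descent_step p : bool := [exists i : 'I_m, (i.+1 == p) && is_descent w i].

Definition is_chain f : Prop :=
  forall p, p < m.+1 -> chain_at f p.+1 + descent_step p <= chain_at f p.

Definition gaps f p : nat := chain_at f p - chain_at f p.+1 - descent_step p.

Definition tail_sum d p : nat := \sum_(p <= i < m.+1) (d i + descent_step i).

Definition of_gaps d (x : 'I_m.+1) : nat := tail_sum d (sigma^-1 x)%g.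

Lemma chain_at_ord f (p : 'I_m.+1) : chain_at f p = f (sigma p).
Proof. by rewrite /chain_at ltn_ord inord_val. Qed.

Lemma chain_at0 f : chain_at f 0 = f ord0.
Proof. by rewrite (chain_at_ord f ord0) lift_perm_id. Qed.

Lemma chain_at_lift f (j : 'I_m) : chain_at f j.+1 = tailf f (w j).
Proof. by rewrite (chain_at_ord f (lift ord0 j)) lift_perm_lift. Qed.

Lemma chain_at_end f : chain_at f m.+1 = 0.
Proof. by rewrite /chain_at ltnn. Qed.

Lemma weight_chain_at f : weight f = \sum_(p < m.+1) chain_at f p.
Proof.
rewrite /weight (reindex_inj (@perm_inj _ sigma)) /=.
by apply: eq_bigr => p _; rewrite chain_at_ord.
Qed.

Lemma descent_stepS (j : 'I_m) : descent_step j.+1 = is_descent w j.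
Proof.
apply/existsP/idP => [[i /andP [/eqP/succn_inj eq_ij]]|desc_j]; last by exists j; rewrite eqxx.
by rewrite (_ : i = j) //; apply: val_inj.
Qed.

Lemma descent_step_ge p : m <= p -> descent_step p = false.
Proof.
move=> le_mp; apply/existsP => [[i /andP [/eqP eq_ip /existsP [k /andP [/eqP eq_k _]]]]].
by have := ltn_ord k; rewrite eq_k eq_ip ltnNge le_mp.
Qed.

Lemma is_descentE (i j : 'I_m) : j = i.+1 :> nat -> is_descent w i = (w j < w i).
Proof.
move=> eq_ji; apply/existsP/idP => [[k /andP [/eqP eq_k]]|lt_ji].
  by rewrite (_ : k = j) //; apply: val_inj; rewrite /= eq_k eq_ji.
by exists j; rewrite eq_ji eqxx.
Qed.

Lemma sum_descent_step : \sum_(p < m.+1) p.+1 * descent_step p = des w + maj w.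
Proof.
rewrite big_ord_recl (_ : descent_step 0 = false) ?muln0 ?add0n; last by apply/existsP => [[i]].
rewrite /des /maj -sum1_card [X in _ = X + _]big_mkcond [X in _ = _ + X]big_mkcond -big_split /=.
apply: eq_bigr => j _; rewrite inE /bump /= add1n descent_stepS.
by case: (is_descent w j); rewrite ?muln1 ?muln0.
Qed.

Lemma tail_sumS d p : p < m.+1 -> tail_sum d p = d p + descent_step p + tail_sum d p.+1.
Proof. by move=> lt_p; rewrite /tail_sum big_ltn. Qed.

Lemma tail_sum_end d : tail_sum d m.+1 = 0.
Proof. by rewrite /tail_sum big_geq. Qed.

Lemma tail_sum_le d p p' : p <= p' -> tail_sum d p' <= tail_sum d p.
Proof.
move=> le_pp'; case: (leqP p' m.+1) => [le_p'm|lt_mp'].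
  by rewrite /tail_sum (big_cat_nat le_pp' le_p'm) leq_addl.
by rewrite /tail_sum big_geq // ltnW.
Qed.

Lemma eq_of_gaps d1 d2 : (forall p, p < m.+1 -> d1 p = d2 p) -> of_gaps d1 =1 of_gaps d2.
Proof. by move=> eq_d x; apply: eq_big_nat => p /andP [_ /eq_d ->]. Qed.

Lemma chain_at_of_gaps d p : p <= m.+1 -> chain_at (of_gaps d) p = tail_sum d p.
Proof.
rewrite leq_eqVlt => /orP [/eqP ->|lt_p]; first by rewrite chain_at_end tail_sum_end.
by rewrite /chain_at lt_p /of_gaps permK inordK.
Qed.

Lemma of_gaps_chain d : is_chain (of_gaps d).
Proof.
move=> p lt_p; rewrite (chain_at_of_gaps _ lt_p) (chain_at_of_gaps _ (ltnW lt_p)).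
by rewrite (tail_sumS d lt_p); lia.
Qed.

Lemma gaps_of_gaps d p : p < m.+1 -> gaps (of_gaps d) p = d p.
Proof.
move=> lt_p; rewrite /gaps (chain_at_of_gaps _ lt_p) (chain_at_of_gaps _ (ltnW lt_p)).
by rewrite (tail_sumS d lt_p); lia.
Qed.

Lemma chain_at_gaps f p : is_chain f -> p <= m.+1 -> chain_at f p = tail_sum (gaps f) p.
Proof.
move=> chain_f; move: {2}(m.+1 - p) (erefl (m.+1 - p)) => n.
elim: n p => [|n IH] p eq_n le_p.
  rewrite (_ : p = m.+1) ?chain_at_end ?tail_sum_end //.
  by apply/eqP; rewrite eqn_leq le_p -subn_eq0 eq_n.
have lt_p : p < m.+1 by rewrite -subn_gt0 eq_n.
have := chain_f p lt_p; rewrite (tail_sumS _ lt_p) -IH ?subnS ?eq_n // /gaps.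
by move: (descent_step p : nat) => e; lia.
Qed.

Lemma of_gaps_gaps f : is_chain f -> of_gaps (gaps f) =1 f.
Proof.
move=> chain_f x; rewrite /of_gaps -chain_at_gaps //; last exact: ltnW.
by rewrite chain_at_ord permKV.
Qed.

Lemma weight_of_gaps d : weight (of_gaps d) = \sum_(i < m.+1) i.+1 * d i + (des w + maj w).
Proof.
rewrite weight_chain_at (eq_bigr (fun p : 'I_m.+1 => tail_sum d p)) => [|p _]; last first.
  by rewrite chain_at_of_gaps // ltnW.
rewrite sum_tail_sums -sum_descent_step -big_split /=.
by apply: eq_bigr => i _; rewrite mulnDr.
Qed.

Lemma chainP f : is_chain f <-> first_max f /\ sorts w (tailf f).
Proof.
split=> [chain_f|[/forallP first_max_f /sortsP sorted_f] [|i] lt_p].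
- split.
    apply/forallP => j; rewrite -(permKV sigma j) -chain_at_ord -chain_at0.
    by rewrite !chain_at_gaps // ?tail_sum_le // ltnW.
  apply/sortsP => i j eq_ji; have := chain_f i.+1 (ltn_ord i).
  rewrite descent_stepS (is_descentE eq_ji) (chain_at_lift f i) -eq_ji (chain_at_lift f j).
  rewrite /ge_stable; case: ltnP => _; rewrite ?addn1 ?addn0 => le_f; rewrite ?le_f //.
  by rewrite andbT orbC eq_sym -leq_eqVlt.
- rewrite chain_at0 (_ : descent_step 0 = false) ?addn0; last by apply/existsP => [[]].
  by rewrite /chain_at; case: ifP.
have [lt_i1m|le_mi1] := ltnP i.+1 m; last first.
  rewrite descent_step_ge // (_ : i.+2 = m.+1) ?chain_at_end //.
  by apply/eqP; rewrite eqn_leq lt_p ltnS.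
have lt_im : i < m := lt_p.
pose i' := Ordinal lt_im; pose j' := Ordinal lt_i1m.
have := sorted_f i' j' erefl; rewrite (descent_stepS i') (@is_descentE i' j' erefl).
rewrite (chain_at_lift f i') (chain_at_lift f j') /ge_stable.
case: (ltnP (w j') (w i')) => [lt_w|le_w] /orP [lt_f|/andP [/eqP eq_f le_w']];
  rewrite ?addn1 ?addn0 ?eq_f //.
exact: ltnW.
Qed.

Lemma gaps_le f p : gaps f p <= chain_at f p.
Proof. by rewrite /gaps -subnDA leq_subr. Qed.

Lemma chain_at_le f B p : (forall x, f x <= B) -> chain_at f p <= B.
Proof. by rewrite /chain_at; case: ifP. Qed.

Lemma of_gaps_le d B x : (forall i, i < m.+1 -> d i <= B) -> of_gaps d x <= m.+1 * B.+1.
Proof.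
move=> le_dB; rewrite /of_gaps (leq_trans (tail_sum_le d (leq0n _))) //.
rewrite /tail_sum -{2}[m.+1]subn0 -sum_nat_const_nat big_nat_cond [X in _ <= X]big_nat_cond.
apply: leq_sum => i /andP [/andP [_ lt_i] _]; rewrite -addn1 leq_add ?le_dB //.
by case: descent_step.
Qed.

End Gaps.

(** * The generating function *)

Local Open Scope ring_scope.

Lemma sum_natf_widen (V : nmodType) (A : finType) b b' (P : pred (A -> nat))
    (F : (A -> nat) -> V) :
  (b <= b')%N -> (forall g, P g -> forall x, (g x <= b)%N) ->
  \sum_(f : {ffun A -> 'I_b.+1} | P (natf f)) F (natf f) =
  \sum_(f : {ffun A -> 'I_b'.+1} | P (natf f)) F (natf f).
Proof.
move=> le_bb' Pb.
pose h (f : {ffun A -> 'I_b.+1}) := [ffun x => widen_ord (le_bb' : (b.+1 <= b'.+1)%N) (f x)].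
have natf_h f : natf (h f) = natf f by apply/ffunP => x; rewrite !ffunE.
rewrite [RHS](reindex_onto h (fun f => [ffun x => inord (f x)])) => [|f Pf].
  apply: eq_big => [f|f _]; rewrite natf_h //.
  rewrite (_ : [ffun x => inord (h f x)] = f) ?eqxx ?andbT //.
  by apply/ffunP => x; apply: val_inj; rewrite !ffunE /= inordK.
apply/ffunP => x; apply: val_inj; rewrite !ffunE /= inordK // ltnS.
by have := Pb _ Pf x; rewrite ffunE.
Qed.

Lemma ler_sum_inj (R : numDomainType) (A B : finType) (P : pred A) (Q : pred B)
    (h : A -> B) (F : B -> R) :
  {in P &, injective h} -> (forall x, P x -> Q (h x)) -> (forall y, 0 <= F y) ->
  \sum_(x | P x) F (h x) <= \sum_(y | Q y) F y.
Proof.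
move=> h_inj PQ F_ge0; rewrite -(big_imset _ h_inj) /= big_mkcond [X in _ <= X]big_mkcond /=.
apply: ler_sum => y _; case: ifP => [/imsetP [x Px ->]|_]; first by rewrite PQ.
by case: ifP.
Qed.

Lemma Un_cv_const (c : R) : Un_cv (fun _ => c) c.
Proof. by move=> e e_gt0; exists 0%N => n _; rewrite /Rdist Rminus_eq_0 Rabs_R0. Qed.

Lemma Un_cv_ext (u v : nat -> R) l : u =1 v -> Un_cv u l -> Un_cv v l.
Proof.
by move=> eq_uv cv_u e e_gt0; have [N cvN] := cv_u e e_gt0; exists N => n /cvN; rewrite eq_uv.
Qed.

Lemma Un_cv_big_sum (I : Type) (r : seq I) (u : I -> nat -> R) (l : I -> R) :
  (forall i, Un_cv (u i) (l i)) -> Un_cv (fun n => \sum_(i <- r) u i n) (\sum_(i <- r) l i).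
Proof.
move=> cv_u; elim: r => [|i r IH].
  by rewrite big_nil; apply: Un_cv_ext (Un_cv_const 0) => n; rewrite big_nil.
by rewrite big_cons; apply: Un_cv_ext (CV_plus _ _ _ _ (cv_u i) IH) => n; rewrite big_cons.
Qed.

Lemma Un_cv_big_prod (I : Type) (r : seq I) (u : I -> nat -> R) (l : I -> R) :
  (forall i, Un_cv (u i) (l i)) -> Un_cv (fun n => \prod_(i <- r) u i n) (\prod_(i <- r) l i).
Proof.
move=> cv_u; elim: r => [|i r IH].
  by rewrite big_nil; apply: Un_cv_ext (Un_cv_const 1) => n; rewrite big_nil.
by rewrite big_cons; apply: Un_cv_ext (CV_mult _ _ _ _ (cv_u i) IH) => n; rewrite big_cons.
Qed.

Section Geometric.
Variable x : R.
Hypotheses (x_ge0 : 0 <= x) (x_lt1 : x < 1).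

Lemma geometric_sum_le n : \sum_(j < n) x ^+ j <= (1 - x)^-1.
Proof.
have x1_gt0 : 0 < 1 - x by rewrite subr_gt0.
rewrite -(ler_pM2l x1_gt0) mulfV ?gt_eqF // -opprB mulNr -subrX1 opprB.
by rewrite gerBl exprn_ge0.
Qed.

Lemma geometric_sum_cvg : Un_cv (fun n => \sum_(j < n.+1) x ^+ j) (1 - x)^-1.
Proof.
have abs_x : Rlt (Rabs x) 1 by apply/RltP; rewrite RabsE ger0_norm.
apply: Un_cv_ext (GP_infinite x abs_x) => n.
by rewrite sum_f_R0E big_mkord; apply: eq_bigr => i _; rewrite RmultE RpowE mul1r.
Qed.

End Geometric.

Section GeneratingFunction.
Variables (m : nat) (t : R).
Hypotheses (t_gt0 : 0 < t) (t_lt1 : t < 1).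

Definition weight_sum b (P : pred ('I_m.+1 -> nat)) : R :=
  \sum_(f : {ffun 'I_m.+1 -> 'I_b.+1} | P (natf f)) t ^+ weight (natf f).

Definition perm_sum b (w : 'S_m) : R :=
  weight_sum b (fun f => first_max f && (sorting_perm (tailf f) == w)).

Definition gap_sum b (w : 'S_m) : R :=
  \sum_(d : {ffun 'I_m.+1 -> 'I_b.+1}) t ^+ (\sum_(i < m.+1) i.+1 * d i + (des w + maj w))%N.

Definition carlitz_limit : R :=
  \sum_(w : 'S_m) t ^+ (des w + maj w) * \prod_(i < m.+1) (1 - t ^+ i.+1)^-1.

Lemma texp_ge0 k : 0 <= t ^+ k.
Proof. exact/exprn_ge0/ltW. Qed.

Lemma weight_sum_perm b : weight_sum b (@first_max m) = \sum_w perm_sum b w.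
Proof. exact: partition_big. Qed.

Lemma perm_sum_le_gap_sum b w : perm_sum b w <= gap_sum b w.
Proof.
pose h (f : {ffun 'I_m.+1 -> 'I_b.+1}) : {ffun 'I_m.+1 -> 'I_b.+1} :=
  [ffun p : 'I_m.+1 => inord (gaps w (natf f) p)].
have h_gaps f (p : 'I_m.+1) : h f p = gaps w (natf f) p :> nat.
  rewrite ffunE inordK // ltnS (leq_trans (gaps_le _ _ _)) // chain_at_le // => x.
  by rewrite ffunE -ltnS ltn_ord.
have chain_f f :
    first_max (natf f) && (sorting_perm (tailf (natf f)) == w) -> is_chain w (natf f).
  by case/andP => max_f /eqP <-; apply/chainP; split; last exact: sorts_sorting_perm.
rewrite /perm_sum /weight_sum.
rewrite (eq_bigr (fun f => t ^+ (\sum_(i < m.+1) i.+1 * h f i + (des w + maj w)))); last first.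
  move=> f /chain_f chain_f'; congr (t ^+ _).
  rewrite (eq_bigr (fun i : 'I_m.+1 => i.+1 * gaps w (natf f) i)%N) => [|i _]; last first.
    by rewrite h_gaps.
  by rewrite -weight_of_gaps /weight; apply: eq_bigr => x _; rewrite of_gaps_gaps.
apply: (ler_sum_inj (h := h)) => [f1 f2 /chain_f chain1 /chain_f chain2 eq_h| // |d]; last first.
  exact: texp_ge0.
apply/ffunP => x; apply/val_inj.
have := of_gaps_gaps chain1 x; have := of_gaps_gaps chain2 x; rewrite !ffunE => <- <-.
apply: eq_of_gaps => p lt_p.
by rewrite -[p]/(val (Ordinal lt_p)) -!h_gaps eq_h.
Qed.

Lemma gap_sum_le_perm_sum b w : gap_sum b w <= perm_sum (m.+1 * b.+1) w.
Proof.
pose gap_seq (d : {ffun 'I_m.+1 -> 'I_b.+1}) p := val (d (inord p)).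
have gap_seq_le d p : (gap_seq d p <= b)%N by rewrite -ltnS ltn_ord.
pose k d : {ffun 'I_m.+1 -> 'I_(m.+1 * b.+1).+1} :=
  [ffun x => inord (of_gaps w (gap_seq d) x)].
have natf_k d : natf (k d) = of_gaps w (gap_seq d) :> (_ -> _).
  apply: functional_extensionality => x; rewrite !ffunE /= inordK // ltnS.
  by apply: of_gaps_le => p _; apply: gap_seq_le.
rewrite /gap_sum (eq_bigr (fun d => t ^+ weight (natf (k d)))) => [|d _]; last first.
  rewrite natf_k weight_of_gaps; congr (t ^+ (_ + _)); apply: eq_bigr => i _.
  by rewrite /gap_seq inord_val.
apply: (ler_sum_inj (h := k)) => [d1 d2 _ _ eq_k|d _|f]; last exact: texp_ge0.
  apply/ffunP => i; apply/val_inj; rewrite -(inord_val i).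
  change (gap_seq d1 i = gap_seq d2 i).
  rewrite -(gaps_of_gaps w (gap_seq d1) (ltn_ord i)) -(gaps_of_gaps w (gap_seq d2) (ltn_ord i)).
  by rewrite -!natf_k eq_k.
rewrite natf_k; apply/andP; split; first by case/chainP: (of_gaps_chain w (gap_seq d)).
by apply/eqP/sorting_permE; case/chainP: (of_gaps_chain w (gap_seq d)).
Qed.

Lemma gap_sumE b w :
  gap_sum b w = t ^+ (des w + maj w) * \prod_(i < m.+1) \sum_(j < b.+1) (t ^+ i.+1) ^+ j.
Proof.
rewrite bigA_distr_bigA mulr_sumr; apply: eq_bigr => d _.
by rewrite exprD mulrC expr_sum; congr (_ * _); apply: eq_bigr => i _; rewrite -exprM.
Qed.

Lemma weight_sum_le b : weight_sum b (@first_max m) <= carlitz_limit.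
Proof.
rewrite weight_sum_perm; apply: ler_sum => w _; apply: (le_trans (perm_sum_le_gap_sum b w)).
rewrite gap_sumE ler_wpM2l ?texp_ge0 //; apply: ler_prod => i _.
rewrite sumr_ge0 => [|j _]; last exact/exprn_ge0/texp_ge0.
by rewrite geometric_sum_le ?texp_ge0 // exprn_ilt1 // ltW.
Qed.

Lemma gap_sum_cvg : Un_cv (fun b => \sum_w gap_sum b w) carlitz_limit.
Proof.
apply: Un_cv_ext (Un_cv_big_sum _ _) => [b|w]; first by apply: eq_bigr => w _; rewrite gap_sumE.
apply: CV_mult (Un_cv_const _) (Un_cv_big_prod _ _) => i.
by apply: geometric_sum_cvg; rewrite ?texp_ge0 // exprn_ilt1 // ltW.
Qed.

End GeneratingFunction.

(** * The Dirichlet series *)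

Lemma infinite_sum_squeeze (a : nat -> R) l :
  (forall n, sum_f_R0 a n <= l) ->
  (forall e, 0 < e -> exists N, forall n, (N <= n)%N -> l - e < sum_f_R0 a n) ->
  infinite_sum a l.
Proof.
move=> le_l near_l e /RltP e_gt0; have [N ltN] := near_l e e_gt0.
exists N => n /ssrnat.leP le_Nn; apply/RltP; rewrite RdistE ler0_norm ?subr_le0 //.
by have := ltN n le_Nn; lra.
Qed.

Lemma carlitzE m (t : R) : carlitz m t t = \sum_(w : 'S_m) t ^+ (des w + maj w).
Proof.
rewrite /carlitz foldrE big_map big_enum /=.
by apply: eq_big => [w|w _]; rewrite ?inE // RmultE !RpowE exprD.
Qed.

Lemma denomE m (t : R) : denom m t = \prod_(i < m) (1 - t ^+ i.+1).
Proof.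
rewrite /denom foldrE big_map (_ : iota 1 m = index_iota 1 m.+1); last first.
  by rewrite /index_iota subn1.
rewrite big_add1 big_mkord.
by apply: eq_bigr => i _; rewrite RminusE RpowE.
Qed.

Lemma carlitz_limitE m (t : R) : Rdiv (carlitz m t t) (denom m.+1 t) = carlitz_limit m t.
Proof. by rewrite carlitzE denomE RdivE /carlitz_limit -prodfV mulr_suml. Qed.

Lemma inord_predE n N (k : 'I_n.+1) :
  (0 < N)%N -> ((N <= n.+1)%N && (inord N.-1 == k)) = (N == k.+1)%N.
Proof.
case: N => // N _; apply/andP/eqP => [[le_Nn /eqP <-]|->]; last by rewrite ltn_ord inord_val.
by rewrite inordK.
Qed.

Section DirichletSeries.
Variables (m q : nat) (s : R).
Hypotheses (q_ge2 : (2 <= q)%N) (s_gt0 : Rlt 0 s).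
Local Notation t := (Rpower (INR q) (Ropp s)).

Lemma Rpower_q_gt0 : 0 < t.
Proof. exact/RltP/exp_pos. Qed.

Lemma Rpower_q_lt1 : t < 1.
Proof.
have q_gt1 : Rlt 1 (INR q) by apply: (lt_INR 1 q); apply/ssrnat.leP.
have := Rpower_lt _ _ 0 q_gt1 (Ropp_lt_gt_0_contravar _ s_gt0).
by rewrite Rpower_O => [/RltP //|]; apply: Rlt_trans q_gt1; apply: Rlt_0_1.
Qed.

Lemma Rpower_expn n : Rpower (INR (q ^ n)) (Ropp s) = t ^+ n.
Proof.
have q_gt0 : Rlt 0 (INR q) by apply: (lt_INR 0 q); apply/ssrnat.leP/ltnW.
rewrite -RpowE -Rpower_pow; last exact/RltP/Rpower_q_gt0.
by rewrite INRE natrX -INRE -RpowE -Rpower_pow // !Rpower_mult Rmult_comm.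
Qed.

Definition star_term k : R :=
  Rmult (INR #|star_codes q m k.+1|) (Rpower (INR k.+1) (Ropp s)).

Lemma star_termE k : star_term k = weight_sum t k.+1 (@star_code m q k.+1).
Proof.
rewrite /star_term RmultE INRE mulr_natl -sumr_const; apply: eq_big => [f|f]; rewrite inE //.
by case/andP=> _ /eqP eq_w; rewrite -Rpower_expn eq_w.
Qed.

Lemma star_partial_sum n :
  sum_f_R0 star_term n =
  weight_sum t n.+1 (fun f : 'I_m.+1 -> nat => first_max f && (q ^ weight f <= n.+1)%N).
Proof.
rewrite /weight_sum (partition_big (fun f => inord (q ^ weight (natf f)).-1 : 'I_n.+1) xpredT) //=.
rewrite sum_f_R0E big_mkord; apply: eq_bigr => k _; rewrite star_termE /weight_sum.
rewrite (@sum_natf_widen _ _ k.+1 n.+1 (star_code q k.+1) (fun g => t ^+ weight g) (ltn_ord k))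
  => [|g /andP [_ /eqP eq_w] x].
  by apply: eq_bigl => f; rewrite -andbA inord_predE ?expn_gt0 ?(ltnW q_ge2).
by rewrite -eq_w (leq_trans (weight_ge g x)) // ltnW // ltn_expl.
Qed.

Lemma star_partial_sum_le n : sum_f_R0 star_term n <= carlitz_limit m t.
Proof.
apply: (le_trans _ (weight_sum_le m Rpower_q_gt0 Rpower_q_lt1 n.+1)); rewrite star_partial_sum.
apply: (ler_sum_inj (h := id)) => [//|f /andP [] //|f]; exact/exprn_ge0/ltW/Rpower_q_gt0.
Qed.

Lemma weight_sum_le_star_partial_sum b n :
  (q ^ (m.+1 * b) <= n.+1)%N -> weight_sum t b (@first_max m) <= sum_f_R0 star_term n.
Proof.
move=> le_qn.
have le_weight (g : 'I_m.+1 -> nat) : (forall x, g x <= b)%N -> (weight g <= m.+1 * b)%N.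
  move=> le_gb; rewrite (@leq_trans (\sum_(x : 'I_m.+1) b)) ?leq_sum //.
  by rewrite sum_nat_const card_ord mulnC.
pose P (g : 'I_m.+1 -> nat) := first_max g && [forall x, g x <= b]%N.
have -> : weight_sum t b (@first_max m) = weight_sum t b P.
  apply: eq_bigl => f; rewrite /P (_ : [forall x, _] = true) ?andbT //.
  by apply/forallP => x; rewrite ffunE -ltnS ltn_ord.
have le_bn : (b <= n.+1)%N.
  by rewrite (leq_trans (leq_pmull b (ltn0Sn m))) // (leq_trans (ltnW (ltn_expl _ q_ge2))).
rewrite /weight_sum (@sum_natf_widen _ _ b n.+1 P (fun g => t ^+ weight g)) //; last first.
  by move=> g /andP [_ /forallP].
rewrite star_partial_sum; apply: (ler_sum_inj (h := id)) => [//|f /andP [max_f /forallP le_fb]|f].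
  by rewrite max_f (leq_trans _ le_qn) // leq_pexp2l ?(ltnW q_ge2) // le_weight.
exact/exprn_ge0/ltW/Rpower_q_gt0.
Qed.

Lemma star_series_cvg : infinite_sum star_term (carlitz_limit m t).
Proof.
apply: infinite_sum_squeeze => [|e e_gt0]; first exact: star_partial_sum_le.
move/RltP: e_gt0 => /(gap_sum_cvg m Rpower_q_gt0 Rpower_q_lt1) [N cvgN].
have := cvgN N (le_n N); rewrite RdistE => /RltP; rewrite ltr_norml => /andP [near_N _].
(* Exponent vectors with entries at most (m+1)(N+1) have index at most this bound. *)
exists (q ^ (m.+1 * (m.+1 * N.+1)))%N => n le_qn.
have le_gap : \sum_(w : 'S_m) gap_sum t N w <= weight_sum t (m.+1 * N.+1) (@first_max m).
  by rewrite weight_sum_perm; apply: ler_sum => w _; apply: gap_sum_le_perm_sum Rpower_q_gt0 _ _.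
have := weight_sum_le_star_partial_sum (leqW le_qn); lra.
Qed.

End DirichletSeries.

Local Close Scope ring_scope.

Theorem proposition3p3 (O : idomainType) (q a : nat) :
  (1 <= a)%N -> compact_dvr_residue O q ->
  forall s : R, Rlt R0 s ->
  let t := Rpower (INR q) (Ropp s) in
  exists c : nat -> nat,
    (forall N : nat,
       card_set (fun L : 'I_a -> O -> Prop => star_subrep L /\ total_index L N) (c N)) /\
    infinite_sum (fun n : nat => Rmult (INR (c n.+1)) (Rpower (INR n.+1) (Ropp s)))
                 (Rdiv (carlitz (a - 1) t t) (denom a t)).
Proof.
case: a => [//|m] _ [pi [pi_unif [_ residue_q]]] s s_gt0 t.
exists (fun N => #|star_codes q m N|); split.
  exact: card_set_star_subrep pi_unif residue_q.
rewrite subSS subn0 carlitz_limitE.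
exact: star_series_cvg (residue_card_ge2 pi_unif residue_q) s_gt0.
Qed.
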